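(* Let $-\infty\le l<r\le+\infty$, let $D$ be an interval with endpoints $l$ and $r$ (each endpoint may or may not belong to $D$), and write $\mathcal I=(l,r)$. Let $X_t$ be a regular diffusion with values in $D$ solving $dX_t=a(X_t)\,dt+\sigma(X_t)\,dw_t$, $X_0=x$, where $w_t$ is a standard Wiener process, $a:D\to\mathbb R$, $\sigma:D\to\mathbb R_+$, and for every $x\in\mathcal I$ there is $\varepsilon>0$ with $\int_{x-\varepsilon}^{x+\varepsilon}\frac{1+|a(y)|}{\sigma^2(y)}\,dy<\infty$. Let $\rho>0$ be a discount rate and $I$ an investment cost with $I<r$. Let $\psi$ be an increasing positive fundamental solution on $\mathcal I$ of $a(x)f'(x)+\frac12\sigma^2(x)f''(x)=\rho f(x)$. For $p\in\mathcal I$ let $\tau_p=\inf\{t\ge0: X_t\ge p\}$ and $$V(p;x)=\mathbb E^x\big[(X_{\tau_p}-I)e^{-\rho\tau_p}\mathbf 1_{\{\tau_p<\infty\}}\big]$$ (so $V(p;x)=x-I$ for $x\ge p$ and $V(p;x)=(p-I)\mathbb E^x e^{-\rho\tau_p}$ for $x<p$). Then a threshold $p^*\in\mathcal I$ satisfies $V(p^*;x)\ge V(p;x)$ for all $p\in\mathcal I$ and all $x\in\mathcal I$ if and only if (i) $\frac{p-I}{\psi(p)}\le\frac{p^*-I}{\psi(p^* )}$ whenever $p<p^*$ (with $p\in\mathcal I$), and (ii) the function $p\mapsto\frac{p-I}{\psi(p)}$ does not increase on $\{p\in\mathcal I: p\ge p^*\}$.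
   Context: $\mathbb E^x$ denotes expectation for the process started at $x$. Regularity means that from any $x\in\mathcal I$ the process reaches any $y\in\mathcal I$ in finite time with positive probability. The increasing fundamental solution $\psi$ (unique up to a positive multiplicative constant, with absolutely continuous derivative, solving the ODE a.e. on $\mathcal I$, and satisfying $0<\psi<\infty$ on $\mathcal I$) satisfies $\mathbb E^x e^{-\rho T_p}=\psi(x)/\psi(p)$ for $x<p$, where $T_p$ is the first hitting time of $p$. *)

From HB Require Import structures.
From mathcomp Require Import all_boot all_order all_algebra.
From mathcomp Require Import all_classical all_reals.
From mathcomp Require Import ereal.
Set Implicit Arguments. Unset Strict Implicit. Unset Printing Implicit Defensive.
Import Order.TTheory GRing.Theory Num.Theory.
Local Open Scope ring_scope.

Definition inI (R : realType) (l r : \bar R) (x : R) : Prop :=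
  (l < x%:E)%E /\ (x%:E < r)%E.

(* Value of the threshold policy p started at x, given the Laplace transform
   LT x p = E^x exp(-rho T_p) of the first hitting time of p:
   V(p;x) = x - I if x >= p, and (p - I) E^x e^{-rho tau_p} if x < p. *)
Definition Vthr (R : realType) (I0 : R) (LT : R -> R -> R) (p x : R) : R :=
  if p <= x then x - I0 else (p - I0) * LT x p.

From HB Require Import structures.
From mathcomp Require Import all_boot all_order all_algebra.
From mathcomp Require Import all_classical all_reals.
From mathcomp Require Import ereal.
Set Implicit Arguments. Unset Strict Implicit. Unset Printing Implicit Defensive.
Import Order.TTheory GRing.Theory Num.Theory.
Local Open Scope ring_scope.

(* Writing g(p) = (p - I)/psi(p), both branches of the threshold value collapse
   to V(p;x) = g(max p x) psi(x): for x < p this is the Laplace transform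
   formula, for p <= x it is x - I = g(x) psi(x).  As psi > 0, comparing
   policies pointwise in x is comparing g(max p x) with g(max p* x), and a
   threshold p* dominates in this sense exactly when g is maximal at p* among
   smaller thresholds and nonincreasing to the right of p*. *)

Section MaxThreshold.

Variables (R : realType) (D : R -> Prop) (g : R -> R).

Lemma max_threshold_optimalP ps : D ps ->
  (forall p x, D p -> D x -> g (Num.max p x) <= g (Num.max ps x)) <->
  ((forall p, D p -> p < ps -> g p <= g ps) /\
   (forall p q, D p -> D q -> ps <= p -> p <= q -> g q <= g p)).
Proof.
move=> Dps; split=> [opt | [gle_ps gnonincr] p x Dp Dx].
  split=> [p Dp lt_p_ps | p q Dp Dq le_ps_p le_pq].
    by have := opt p p Dp Dp; rewrite maxxx (max_l (ltW lt_p_ps)).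
  by have := opt q p Dq Dp; rewrite (max_l le_pq) (max_r le_ps_p).
have Dm : D (Num.max p x) by rewrite /Num.max; case: ifP.
have le_x_m : x <= Num.max p x by rewrite le_max lexx orbT.
have [le_x_ps | lt_ps_x] := leP x ps.
  have [lt_m_ps | le_ps_m] := ltP (Num.max p x) ps; first exact: gle_ps.
  exact: gnonincr.
by apply: gnonincr => //; apply: ltW.
Qed.

End MaxThreshold.

Section ThresholdValue.

Variables (R : realType) (D : R -> Prop) (I0 : R) (psi : R -> R) (LT : R -> R -> R).
Hypothesis psi_gt0 : forall x, D x -> 0 < psi x.
Hypothesis LT_psi : forall x p, D x -> D p -> x < p -> LT x p = psi x / psi p.

Let gain p := (p - I0) / psi p.

Lemma Vthr_gain p x : D p -> D x -> Vthr I0 LT p x = gain (Num.max p x) * psi x.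
Proof.
move=> Dp Dx; rewrite /Vthr /gain.
have [le_px | lt_xp] := leP p x.
  by rewrite divfK // gt_eqF // psi_gt0.
by rewrite (LT_psi Dx Dp lt_xp) mulrA mulrAC.
Qed.

Lemma Vthr_optimalP ps : D ps ->
  (forall p x, D p -> D x -> Vthr I0 LT p x <= Vthr I0 LT ps x) <->
  (forall p x, D p -> D x -> gain (Num.max p x) <= gain (Num.max ps x)).
Proof.
move=> Dps; split=> opt p x Dp Dx.
  by rewrite -(ler_pM2r (psi_gt0 Dx)) -!Vthr_gain //; apply: opt.
by rewrite !Vthr_gain // ler_pM2r ?psi_gt0 //; apply: opt.
Qed.

End ThresholdValue.

Theorem theorem1 (R : realType) (l r : \bar R) (rho I0 : R)
    (psi : R -> R) (LT : R -> R -> R) :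
  (l < r)%E -> 0 < rho -> (I0%:E < r)%E ->
  (forall x, inI l r x -> 0 < psi x) ->
  (forall x y, inI l r x -> inI l r y -> x <= y -> psi x <= psi y) ->
  (forall x p, inI l r x -> inI l r p -> x < p -> LT x p = psi x / psi p) ->
  forall pstar, inI l r pstar ->
  ((forall p x, inI l r p -> inI l r x -> Vthr I0 LT p x <= Vthr I0 LT pstar x)
   <->
   ((forall p, inI l r p -> p < pstar ->
       (p - I0) / psi p <= (pstar - I0) / psi pstar) /\
    (forall p q, inI l r p -> inI l r q -> pstar <= p -> p <= q ->
       (q - I0) / psi q <= (p - I0) / psi p))).
Proof.
move=> _ _ _ psi_gt0 _ LT_psi pstar Ipstar.
apply: iff_trans (Vthr_optimalP I0 psi_gt0 LT_psi Ipstar) _.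
exact: (max_threshold_optimalP (fun p => (p - I0) / psi p) Ipstar).
Qed.
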